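(* Let $C\subseteq\mathbb{F}_q^n$ be an $[n,k]$ linear code with $n-k\ge2$ and parity-check matrix $H\in\mathbb{F}_q^{(n-k)\times n}$ of rank $n-k$. Let $u\ge1$ satisfy $\frac{n-k-1}{q^u-1}<1$, and let $p\in\left(\frac{n-k-1}{q^u-1},1\right)$. Put $m=\lceil (n-k-1)/p\rceil$. Then $n-k\le m\le q^u-1$, there exists an MDS code with parameters $[m,n-k,m-(n-k)+1]$ over $\mathbb{F}_{q^u}$, and if $\bar G\in\mathbb{F}_{q^u}^{(n-k)\times m}$ is a generator matrix of any such code, then the list $S$ of the $m$ rows of $\bar G^TH$ is a test set for $C$ with designed probability $\frac{n-k-1}{m}\le p$; in particular $S$ is a test set for $C$ with designed probability $p$.
   Context: $\mathbb{F}_{q^u}$ is the degree-$u$ extension of $\mathbb{F}_q$; $(\mathbf{x},\mathbf{y})=\sum_{j=1}^n x_jy_j$. A test set with designed probability $p\in(0,1)$ for $C$ is a finite nonempty collection $S$ of vectors in $\mathbb{F}_{q^u}^n$ (counted with multiplicity) such that for every $\mathbf{x}\in\mathbb{F}_q^n$: (1) $\mathbf{x}\in C$ iff $(\mathbf{x},\mathbf{y})=0$ for all $\mathbf{y}\in S$; (2) if some $\mathbf{y}\in S$ has $(\mathbf{x},\mathbf{y})\ne0$, then $\#\{\mathbf{y}\in S:(\mathbf{x},\mathbf{y})\ne0\}\ge(1-p)\#S$. *)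

From HB Require Import structures.
From mathcomp Require Import all_boot all_order all_algebra all_field.
Set Implicit Arguments. Unset Strict Implicit. Unset Printing Implicit Defensive.
Import Order.TTheory GRing.Theory Num.Theory.
Local Open Scope ring_scope.

Definition pairing (F L : fieldType) (f : {rmorphism F -> L}) (n : nat)
  (x : 'rV[F]_n) (y : 'rV[L]_n) : L :=
  \sum_(j < n) f (x 0 j) * y 0 j.

Definition test_set (F L : fieldType) (f : {rmorphism F -> L}) (R : numDomainType)
  (n : nat) (C : {vspace 'rV[F]_n}) (S : seq 'rV[L]_n) (p : R) : Prop :=
  [/\ 0 < p < 1, S != [::] &
    forall x : 'rV[F]_n,
      (x \in C <-> (forall y, y \in S -> pairing f x y = 0)) /\
      ((exists2 y, y \in S & pairing f x y != 0) ->
        (1 - p) * (size S)%:R <= (count (fun y => pairing f x y != 0) S)%:R)].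

Definition wt (K : fieldType) (m : nat) (c : 'rV[K]_m) : nat :=
  #|[set i : 'I_m | c 0 i != 0]|.

Definition has_min_dist (K : fieldType) (m : nat) (D : {vspace 'rV[K]_m}) (d : nat) : Prop :=
  (exists2 c, c \in D & (c != 0) && (wt c == d)) /\
  (forall c, c \in D -> c != 0 -> (d <= wt c)%N).

Definition is_code (K : fieldType) (m : nat) (D : {vspace 'rV[K]_m}) (k d : nat) : Prop :=
  \dim D = k /\ has_min_dist D d.

Definition is_generator_matrix (K : fieldType) (k m : nat) (G : 'M[K]_(k, m))
  (D : {vspace 'rV[K]_m}) : Prop :=
  \rank G = k /\ (forall c, c \in D <-> exists v : 'rV[K]_k, c = v *m G).

Definition is_parity_check (F : fieldType) (r n : nat) (H : 'M[F]_(r, n))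
  (C : {vspace 'rV[F]_n}) : Prop :=
  forall x : 'rV[F]_n, x \in C <-> H *m x^T = 0.

(* The pairing of x with the i-th row of G^T H is the i-th coordinate of the
   codeword f(x H^T) G, i.e. of the syndrome of x encoded by G.  Since G has full
   rank this codeword vanishes iff x is in C, and otherwise it is a nonzero
   codeword of an MDS [m, n-k] code, so at most n-k-1 <= p m of its m coordinates
   vanish.  The bounds n-k <= m <= q^u - 1 come from m = ceil((n-k-1)/p) and
   (n-k-1)/(q^u-1) < p < 1, and a Reed-Solomon code on m distinct points of
   F_{q^u} provides the MDS code. *)

From HB Require Import structures.
From mathcomp Require Import all_boot all_order all_algebra all_field.
From mathcomp Require Import zify.
Set Implicit Arguments. Unset Strict Implicit. Unset Printing Implicit Defensive.
Import Order.TTheory GRing.Theory Num.Theory.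
Local Open Scope ring_scope.

Lemma wt0 (K : fieldType) (m : nat) : wt (0 : 'rV[K]_m) = 0%N.
Proof. by apply/eqP; rewrite cards_eq0; apply/eqP/setP => j; rewrite !inE mxE eqxx. Qed.

Lemma wt_eq0 (K : fieldType) (m : nat) (c : 'rV[K]_m) : (wt c == 0%N) = (c == 0).
Proof.
apply/idP/idP => [|/eqP ->]; last by rewrite wt0.
rewrite cards_eq0 => /eqP c0; apply/eqP/rowP => j; rewrite mxE.
by apply/eqP/negPn; apply/negP => cj; have := in_set0 j; rewrite -c0 inE cj.
Qed.

Lemma wt_eq_card_nonroots (K : fieldType) (m : nat) (x : 'I_m -> K) (P : {poly K})
  (c : 'rV[K]_m) : (forall j, c 0 j = P.[x j]) ->
  wt c = #|~: [set j | root P (x j)]|.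
Proof. by move=> cE; apply: eq_card => j; rewrite !inE cE. Qed.

Lemma card_roots_lt (K : fieldType) (m : nat) (x : 'I_m -> K) (P : {poly K}) :
  injective x -> P != 0 -> (#|[set j | root P (x j)]| < size P)%N.
Proof.
move=> xinj P0; rewrite cardE -(size_map x); apply: max_poly_roots => //.
  by apply/allP => y /mapP [j]; rewrite mem_enum inE => + ->.
by rewrite map_inj_uniq ?enum_uniq.
Qed.

Section EvaluationCode.

Variables (K : fieldType) (r m : nat) (a : 'rV[K]_m).
Hypotheses (ainj : injective (a 0)) (rm : (r <= m)%N).

Local Notation V := (Vandermonde r a).

Lemma mul_Vandermonde (v : 'rV[K]_r) j : (v *m V) 0 j = (rVpoly v).[a 0 j].
Proof.
rewrite (horner_coef_wide _ (size_poly _ _)) !mxE; apply: eq_bigr => i _.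
by rewrite mxE coef_rVpoly_ord.
Qed.

(* A nonzero polynomial of degree < r has fewer than r roots among the a_j. *)
Lemma wt_mul_Vandermonde (v : 'rV[K]_r) : v != 0 -> (m - r + 1 <= wt (v *m V))%N.
Proof.
move=> v0; have P0 : rVpoly v != 0.
  by apply: contra v0 => /eqP P0; rewrite -[v]rVpolyK P0 linear0.
rewrite (wt_eq_card_nonroots (mul_Vandermonde v)).
have := cardsC [set j | root (rVpoly v) (a 0 j)]; rewrite card_ord.
have : (size (rVpoly v) <= r)%N := size_poly _ _.
have := card_roots_lt ainj P0; lia.
Qed.

Definition evaluation_map : 'Hom('rV[K]_r, 'rV[K]_m) := linfun (mulmxr V).

Definition evaluation_code : {vspace 'rV[K]_m} := limg evaluation_map.

Lemma evaluation_codeP c : reflect (exists v, c = v *m V) (c \in evaluation_code).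
Proof.
apply: (iffP memv_imgP) => [[v _ ->]|[v ->]]; first by exists v; rewrite lfunE.
by exists v; rewrite ?memvf ?lfunE.
Qed.

Lemma dim_evaluation_code : \dim evaluation_code = r.
Proof.
rewrite limg_dim_eq; first by rewrite dimvf /dim /= mul1n.
suff /eqP -> : lker evaluation_map == 0%VS by rewrite capv0.
apply/lker0P => v w; rewrite !lfunE /= => /eqP; rewrite -subr_eq0 -mulmxBl.
apply: contraTeq; rewrite -subr_eq0 => /wt_mul_Vandermonde.
by rewrite -wt_eq0 -lt0n => /(leq_trans _)->; rewrite ?addn1.
Qed.

(* The polynomial vanishing exactly at the points indexed by Z. *)
Lemma wt_mul_Vandermonde_zeros (Z : {set 'I_m}) : (#|Z| < r)%N ->
  exists v : 'rV[K]_r, wt (v *m V) = (m - #|Z|)%N.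
Proof.
move=> Zr; pose P := \prod_(j <- enum Z) ('X - (a 0 j)%:P).
have sizeP : size P = #|Z|.+1 by rewrite size_prod_XsubC cardE.
exists (poly_rV P); rewrite (wt_eq_card_nonroots (mul_Vandermonde _)).
rewrite poly_rV_K ?sizeP //.
have -> : [set j | root P (a 0 j)] = Z.
  apply/setP => j; rewrite inE /P -(big_map (a 0) xpredT (fun y => 'X - y%:P)).
  by rewrite root_prod_XsubC (mem_map ainj) mem_enum.
by rewrite cardsCs setCK card_ord.
Qed.

Lemma is_code_evaluation_code : (0 < r)%N -> is_code evaluation_code r (m - r + 1).
Proof.
move=> r0; split; first exact: dim_evaluation_code.
split=> [|c /evaluation_codeP [v ->] c0]; last first.
  by apply: wt_mul_Vandermonde; apply: contraNneq c0 => ->; rewrite mul0mx.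
have rm' : (r.-1 <= m)%N by lia.
have [v wtv] : exists v : 'rV[K]_r, wt (v *m V) = (m - r + 1)%N.
  have widen_inj : injective (widen_ord rm') by move=> i j [] /ord_inj.
  have := @wt_mul_Vandermonde_zeros [set widen_ord rm' j | j : 'I_r.-1].
  rewrite card_imset ?card_ord //.
  have -> : (m - r.-1 = m - r + 1)%N by lia.
  by apply; lia.
exists (v *m V); first by apply/evaluation_codeP; exists v.
by rewrite -wt_eq0 wtv eqxx andbT; lia.
Qed.

End EvaluationCode.

Lemma MDS_code_exists (K : finFieldType) (r m : nat) :
  (0 < r <= m)%N -> (m <= #|K|)%N -> exists D : {vspace 'rV[K]_m}, is_code D r (m - r + 1).
Proof.
move=> /andP [r0 rm] mK; pose a := \row_j enum_val (widen_ord mK j).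
have ainj : injective (a 0).
  by move=> i j; rewrite !mxE => /enum_val_inj [] /ord_inj.
by exists (evaluation_code r a); apply: is_code_evaluation_code.
Qed.

Lemma dimv_rV_le (K : fieldType) (m : nat) (D : {vspace 'rV[K]_m}) : (\dim D <= m)%N.
Proof. by have := dimvS (subvf D); rewrite dimvf /dim /= mul1n. Qed.

Section DualTestSet.

Variables (F L : fieldType) (f : {rmorphism F -> L}) (n r m : nat).
Variables (H : 'M[F]_(r, n)) (G : 'M[L]_(r, m)).

Local Notation S := [seq row i (G^T *m map_mx f H) | i <- enum 'I_m].

Lemma pairing_row_mul (x : 'rV[F]_n) i :
  pairing f x (row i (G^T *m map_mx f H)) = (map_mx f (x *m H^T) *m G) 0 i.
Proof.
rewrite map_mxM -map_trmx -mulmxA -[_ *m G]trmxK trmx_mul trmxK !mxE.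
by apply: eq_bigr => j _; rewrite !mxE.
Qed.

Lemma count_pairing_neq0 (x : 'rV[F]_n) :
  count (fun y => pairing f x y != 0) S = wt (map_mx f (x *m H^T) *m G).
Proof.
rewrite count_map -size_filter.
have /card_uniqP <- := filter_uniq (preim (fun i => row i (G^T *m map_mx f H))
  (fun y => pairing f x y != 0)) (enum_uniq 'I_m).
by apply: eq_card => i; rewrite inE mem_filter mem_enum andbT /= pairing_row_mul.
Qed.

Lemma all_pairing_eq0 (x : 'rV[F]_n) :
  (forall y, y \in S -> pairing f x y = 0) <-> map_mx f (x *m H^T) *m G = 0.
Proof.
split=> [S0 | c0 y /mapP [i _ ->]]; last by rewrite pairing_row_mul c0 mxE.
by apply/rowP => i; rewrite -pairing_row_mul S0 ?mxE //; apply: map_f; rewrite mem_enum.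
Qed.

Variables (C : {vspace 'rV[F]_n}) (D : {vspace 'rV[L]_m}).
Hypotheses (hH : is_parity_check H C) (hD : is_code D r (m - r + 1)).
Hypotheses (hG : is_generator_matrix G D) (m0 : (0 < m)%N).

Lemma mem_code_pairing (x : 'rV[F]_n) :
  x \in C <-> (forall y, y \in S -> pairing f x y = 0).
Proof.
have Gfree : row_free G by rewrite /row_free hG.1.
split=> [/hH Hx | /all_pairing_eq0 /eqP c0].
  apply/all_pairing_eq0.
  by rewrite -[x *m H^T]trmxK trmx_mul trmxK Hx trmx0 map_mx0 mul0mx.
by apply/hH/eqP; move: c0; rewrite mulmx_free_eq0 // map_mx_eq0 -trmx_eq0 trmx_mul trmxK.
Qed.

(* A word outside C has a nonzero syndrome, whose encoding is a nonzero codeword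
   of D, hence has at least m - r + 1 nonzero coordinates. *)
Lemma test_set_dual_MDS (R : numFieldType) (q : R) :
  0 < q < 1 -> (r - 1)%:R / m%:R <= q -> test_set f C S q.
Proof.
move=> q01 rq; have m0R : 0 < m%:R :> R by rewrite ltr0n.
have rm : (r <= m)%N by rewrite -hD.1 dimv_rV_le.
split=> //; first by rewrite -size_eq0 size_map size_enum_ord -lt0n.
move=> x; split; first exact: mem_code_pairing.
case=> y Sy xy0; rewrite count_pairing_neq0 size_map size_enum_ord.
have cD : map_mx f (x *m H^T) *m G \in D by apply/hG.2; exists (map_mx f (x *m H^T)).
have c0 : map_mx f (x *m H^T) *m G != 0.
  by apply: contra xy0 => /eqP /all_pairing_eq0 ->.
apply: le_trans (_ : (m - r + 1)%:R <= _); last by rewrite ler_nat hD.2.2.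
apply: le_trans (_ : (m - (r - 1))%:R <= _); last by rewrite ler_nat; lia.
rewrite natrB; last by lia.
by rewrite mulrBl mul1r lerD2l lerN2 -ler_pdivrMr.
Qed.

End DualTestSet.

Section CeilBounds.

Variables (R : archiRealFieldType) (a Q m : nat) (p : R).
Hypotheses (a0 : (0 < a)%N) (Q0 : (0 < Q)%N).
Hypotheses (ap : a%:R / Q%:R < p) (p1 : p < 1) (m_ceil : m%:Z = Num.ceil (a%:R / p)).

Let p0 : 0 < p.
Proof. by apply: le_lt_trans ap; rewrite divr_ge0. Qed.

Let div_le_m : a%:R / p <= m%:R.
Proof. by have := Num.Theory.ceil_ge (a%:R / p); rewrite -m_ceil. Qed.

Lemma ceil_div_gt : (a < m)%N.
Proof.
rewrite -(ltr_nat R); apply: lt_le_trans div_le_m.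
by rewrite ltr_pdivlMr // gtr_pMr // ltr0n.
Qed.

Lemma ceil_div_le : (m <= Q)%N.
Proof.
rewrite -lez_nat m_ceil Num.Theory.ceil_le_int ler_pdivrMr //.
by rewrite mulrC -[Q%:~R]/(Q%:R) ltW // -ltr_pdivrMr ?ltr0n.
Qed.

Lemma div_ceil_le : a%:R / m%:R <= p.
Proof.
have m0 : 0 < m%:R :> R by rewrite ltr0n; apply: leq_ltn_trans ceil_div_gt.
by rewrite ler_pdivrMr // mulrC -ler_pdivrMr.
Qed.

End CeilBounds.

Theorem mainTheorem4
  (F L : finFieldType) (u : nat) (f : {rmorphism F -> L})
  (hL : #|L| = (#|F| ^ u)%N)
  (n k : nat) (C : {vspace 'rV[F]_n}) (H : 'M[F]_(n - k, n))
  (hdim : \dim C = k) (hnk : (2 <= n - k)%N)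
  (hH : is_parity_check H C) (hrk : \rank H = (n - k)%N)
  (hu : (1 <= u)%N)
  (R : archiRealFieldType)
  (hq : (n - k - 1)%:R / (#|F| ^ u - 1)%:R < 1 :> R)
  (p : R) (hp1 : (n - k - 1)%:R / (#|F| ^ u - 1)%:R < p) (hp2 : p < 1)
  (m : nat) (hm : m%:Z = Num.ceil ((n - k - 1)%:R / p)) :
  [/\ (n - k <= m)%N, (m <= #|F| ^ u - 1)%N,
      exists D : {vspace 'rV[L]_m}, is_code D (n - k) (m - (n - k) + 1)
    & forall (D : {vspace 'rV[L]_m}) (G : 'M[L]_(n - k, m)),
        is_code D (n - k) (m - (n - k) + 1) ->
        is_generator_matrix G D ->
        let S := [seq row i (G^T *m map_mx f H) | i <- enum 'I_m] in
        [/\ test_set f C S ((n - k - 1)%:R / m%:R : R),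
            (n - k - 1)%:R / m%:R <= p
          & test_set f C S p]].
Proof.
have a0 : (0 < n - k - 1)%N by lia.
have Q0 : (0 < #|F| ^ u - 1)%N.
  by rewrite subn_gt0 -{1}(expn0 #|F|) ltn_exp2l ?card_finNzRing_gt1.
have rm : (n - k <= m)%N by have := ceil_div_gt a0 hp1 hp2 hm; lia.
have mQ : (m <= #|F| ^ u - 1)%N := ceil_div_le Q0 hp1 hm.
have ap := div_ceil_le a0 hp1 hp2 hm.
have m0 : (0 < m)%N by lia.
split=> //; first by apply: MDS_code_exists; rewrite ?hL; lia.
move=> D G hD hG S.
have q0 : 0 < (n - k - 1)%:R / m%:R :> R by rewrite divr_gt0 ?ltr0n.
have q1 : (n - k - 1)%:R / m%:R < 1 :> R by rewrite ltr_pdivrMr ?ltr0n // mul1r ltr_nat; lia.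
by split=> //; apply: (test_set_dual_MDS f hH hD hG m0);
  rewrite ?q0 ?q1 ?(lt_le_trans q0 ap).
Qed.
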